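(* Let $r \in \mathbb{Q}_{>0}$ be such that $S_r$ is atomic. Then: (1) if $r < 1$, then $\omega(1) = \infty$; (2) if $r \in \mathbb{N}$, then $\omega(1) = 1$; (3) if $r \in \mathbb{Q}_{>1} \setminus \mathbb{N}$, then $\omega(1) = \mathsf{d}(r)$.
   Context: For $q \in \mathbb{Q}_{>0}$, $\mathsf{n}(q),\mathsf{d}(q)$ are the positive coprime integers with $q = \mathsf{n}(q)/\mathsf{d}(q)$. $S_r$ is the additive submonoid of $(\mathbb{Q}_{\ge 0},+)$ generated by $\{r^n : n \in \mathbb{N}_0\}$; it is atomic exactly when $r=1$ or $\mathsf{n}(r)>1$, and $1$ is always an atom of $S_r$ when atomic. For $x,y \in S_r$, $x \mid_{S_r} y$ means $y = x + w$ for some $w \in S_r$. For $x \in S_r \setminus\{0\}$, $\omega(x)$ is the smallest $n \in \mathbb{N}$ such that whenever $x \mid_{S_r} a_1 + \dots + a_t$ for atoms $a_1, \dots, a_t$, there is $T \subseteq \{1,\dots,t\}$ with $|T| \le n$ and $x \mid_{S_r} \sum_{i \in T} a_i$; if no such $n$ exists, $\omega(x) = \infty$. *)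

From HB Require Import structures.
From mathcomp Require Import all_boot all_order all_algebra.
Set Implicit Arguments. Unset Strict Implicit. Unset Printing Implicit Defensive.
Import Order.TTheory GRing.Theory Num.Theory.
Local Open Scope ring_scope.

(* x belongs to S_r: x is a finite N_0-combination of the powers r^n. *)
Definition inS (r x : rat) : Prop :=
  exists c : seq nat, x = \sum_(i < size c) (nth 0%N c i)%:R * r ^+ i.

Definition atom (r a : rat) : Prop :=
  inS r a /\ a <> 0 /\
  forall u v, inS r u -> inS r v -> a = u + v -> u = 0 \/ v = 0.

Definition atomic (r : rat) : Prop :=
  forall x, inS r x -> x <> 0 ->
    exists s : seq rat, (forall a, a \in s -> atom r a) /\ x = \sum_(a <- s) a.

Definition sdvd (r x y : rat) : Prop := exists w, inS r w /\ y = x + w.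

(* n satisfies the defining property of omega(x): whenever x divides a sum of
   atoms a_1..a_t (given as a list, repetitions allowed), x divides the sum of
   a sub-family of at most n of them (sub-families = subsequences). *)
Definition omega_bound (r x : rat) (n : nat) : Prop :=
  forall s : seq rat, (forall a, a \in s -> atom r a) ->
    sdvd r x (\sum_(a <- s) a) ->
    exists t : seq rat, subseq t s /\ (size t <= n)%N /\ sdvd r x (\sum_(a <- t) a).

Definition omega_eq (r x : rat) (k : nat) : Prop :=
  (0 < k)%N /\ omega_bound r x k /\ forall n, (0 < n)%N -> omega_bound r x n -> (k <= n)%N.

Definition omega_inf (r x : rat) : Prop :=
  forall n, (0 < n)%N -> ~ omega_bound r x n.

From Pilot Require Import Defs.
From HB Require Import structures.
From mathcomp Require Import all_boot all_order all_algebra.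
From mathcomp Require Import zify ring lra.
Import Order.TTheory GRing.Theory Num.Theory.
Set Implicit Arguments. Unset Strict Implicit.
Local Open Scope ring_scope.

(* Every element of S_r is a power sum  sum_{k in ks} r^k  over a finite
   multiset ks of exponents ([inSP]), hence (for r > 0) every atom is a
   power of r ([atom_pow]).  Write r = n/d in lowest terms.
   - r < 1 ([omega_inf_lt1]): choose K with N r^K < 1 and split r^K into
     atoms; d^K copies of this splitting sum to n^K, which 1 divides, while
     any N of these atoms sum to at most N r^K < 1.
   - r >= 1, upper bound omega(1) <= d ([omega_bound_den]).  The arithmetic
     heart is [nat_ndvd_low_digits]: if every exponent occurs fewer than d
     times in ks, no positive integer divides r * sum_{k in ks} r^k; it is
     proved by induction on the exponents, using that n divides every integer
     in r Z[1/d].  So a sum of atoms divisible by 1 contains the atom 1 or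
     d equal atoms r^(j+1), whose sum n r^j is divisible by 1.  For r an
     integer d = 1, which gives omega(1) = 1.
   - r > 1 not an integer, lower bound ([den_le_omega_bound]): r is then an
     atom, d copies of it sum to n, and by [nat_ndvd_low_digits] no fewer
     copies sum to a multiple of 1.
   The theorem combines these three facts.  ([Defs.sdvd] is qualified since
   the order library also defines an [sdvd].) *)

Lemma sumr_nseq (T : Type) (V : nmodType) (F : T -> V) m x :
  \sum_(i <- nseq m x) F i = F x *+ m.
Proof. by rewrite big_nseq; elim: m => [|m ih] //=; rewrite ih mulrS. Qed.

Section PowerSums.

Variable r : rat.

Definition pow_sum (ks : seq nat) : rat := \sum_(k <- ks) r ^+ k.

Lemma pow_sum_cat ks ls : pow_sum (ks ++ ls) = pow_sum ks + pow_sum ls.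
Proof. exact: big_cat. Qed.

Lemma pow_sum_nseq m k : pow_sum (nseq m k) = m%:R * r ^+ k.
Proof. by rewrite /pow_sum sumr_nseq mulr_natl. Qed.

Lemma coef_sum_widen (c : seq nat) B : (size c <= B)%N ->
  \sum_(i < size c) (nth 0%N c i)%:R * r ^+ i =
  \sum_(i < B) (nth 0%N c i)%:R * r ^+ i.
Proof.
move=> hB; rewrite (big_ord_widen B (fun i => (nth 0%N c i)%:R * r ^+ i)) //.
rewrite big_mkcond; apply: eq_bigr => i _; case: ltnP => // hi.
by rewrite nth_default // mul0r.
Qed.

Lemma inS_add x y : inS r x -> inS r y -> inS r (x + y).
Proof.
move=> [c ->] [c' ->]; set B := maxn (size c) (size c').
exists [seq (nth 0 c i + nth 0 c' i)%N | i <- iota 0 B].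
rewrite size_map size_iota (coef_sum_widen (leq_maxl (size c) (size c'))).
rewrite (coef_sum_widen (leq_maxr (size c) (size c'))) -big_split.
apply: eq_bigr => i _ /=.
by rewrite (nth_map 0%N) ?size_iota // nth_iota // add0n natrD mulrDl.
Qed.

Lemma inS_pow k : inS r (r ^+ k).
Proof.
exists (rcons (nseq k 0%N) 1%N); rewrite size_rcons size_nseq big_ord_recr /=.
rewrite nth_rcons size_nseq ltnn eqxx mul1r big1 ?add0r // => i _.
by rewrite nth_rcons size_nseq ltn_ord nth_nseq ltn_ord mul0r.
Qed.

Lemma inSP x : inS r x <-> exists ks, x = pow_sum ks.
Proof.
split=> [[c ->] | [ks ->]].
  apply: (big_ind (fun y => exists ks, y = pow_sum ks)).
  - by exists [::]; rewrite /pow_sum big_nil.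
  - by move=> _ _ [ks ->] [ls ->]; exists (ks ++ ls); rewrite pow_sum_cat.
  - by move=> i _; exists (nseq (nth 0%N c i) (val i)); rewrite pow_sum_nseq.
apply: (big_ind (inS r)); [|exact: inS_add|by move=> k _; apply: inS_pow].
by exists [::]; rewrite big_ord0.
Qed.

Lemma inS_nat m : inS r m%:R.
Proof. by apply/inSP; exists (nseq m 0%N); rewrite pow_sum_nseq mulr1. Qed.

Lemma inS_ge0 x : 0 <= r -> inS r x -> 0 <= x.
Proof.
by move=> hr /inSP [ks ->]; apply: sumr_ge0 => k _; apply: exprn_ge0.
Qed.

Definition shift_exps (ks : seq nat) : seq nat := [seq k.-1 | k <- ks & (0 < k)%N].

Lemma pow_sum_shift ks :
  pow_sum ks = (count_mem 0%N ks)%:R + r * pow_sum (shift_exps ks).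
Proof.
rewrite /pow_sum; elim: ks => [|[|k] ks ih] /=; first by rewrite !big_nil mulr0 addr0.
  by rewrite big_cons ih expr0 natrD addrA.
by rewrite !big_cons ih add0n mulrDr exprS addrCA.
Qed.

Lemma count_shift_exps ks j : count_mem j (shift_exps ks) = count_mem j.+1 ks.
Proof.
rewrite count_map count_filter; apply: eq_count => -[|k] /=.
by rewrite andbF. by rewrite andbT.
Qed.

End PowerSums.

Section Atoms.

Variable r : rat.
Hypothesis hr : 0 < r.

Lemma atom_gt0 a : atom r a -> 0 < a.
Proof.
by move=> [ha [/eqP ha0 _]]; rewrite lt0r ha0 (inS_ge0 (ltW hr) ha).
Qed.

(* Every atom of S_r is a power of r: split one power off its power sum. *)
Lemma atom_pow a : atom r a -> exists k, a = r ^+ k.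
Proof.
move=> [/inSP [[|k ks] ea] [ha0 hsplit]].
  by exfalso; apply: ha0; rewrite ea /pow_sum big_nil.
have ea' : a = r ^+ k + pow_sum r ks by rewrite ea /pow_sum big_cons.
have hks : inS r (pow_sum r ks) by apply/inSP; exists ks.
have [hk | hks0] := hsplit _ _ (inS_pow r k) hks ea'.
  by move/eqP: hk; rewrite expf_eq0 (gt_eqF hr) andbF.
by exists k; rewrite ea' hks0 addr0.
Qed.

Lemma atoms_pow s : (forall a, a \in s -> atom r a) ->
  exists ks, s = map (fun k => r ^+ k) ks.
Proof.
elim: s => [|a s ih] hs; first by exists [::].
have [k ->] := atom_pow (hs a (mem_head a s)).
have [ks ->] : exists ks, s = map (fun k => r ^+ k) ks.
  by apply: ih => b hb; apply: hs; rewrite in_cons hb orbT.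
by exists (k :: ks).
Qed.

End Atoms.

Lemma sum_mem_le (s : seq rat) x :
  (forall a, a \in s -> 0 <= a) -> x \in s -> x <= \sum_(a <- s) a.
Proof.
move=> hs hx; rewrite (big_rem _ hx) /= lerDl big_seq; apply: sumr_ge0 => a ha.
by apply: hs; apply: mem_rem ha.
Qed.

Lemma sum_le_const (t : seq rat) c :
  (forall a, a \in t -> a <= c) -> \sum_(a <- t) a <= c *+ size t.
Proof.
elim: t => [|a t ih] ht; first by rewrite big_nil.
rewrite big_cons mulrS lerD ?ht ?mem_head // ih // => b hb.
by rewrite ht // in_cons hb orbT.
Qed.

Lemma subseq_nseq (T : eqType) (s : seq T) x m :
  (m <= count_mem x s)%N -> subseq (nseq m x) s.
Proof.
move=> hm; apply: subseq_trans (filter_subseq (pred1 x) s).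
have -> : filter (pred1 x) s = nseq (count_mem x s) x.
  by rewrite -size_filter; apply/all_pred1P; apply: filter_all.
by rewrite -(take_nseq x hm) take_subseq.
Qed.

Lemma num_den_eq (r : rat) : 0 < r -> r * (`|denq r|%N)%:R = (`|numq r|%N)%:R.
Proof.
move=> hr; have hn : 0 <= numq r by rewrite numq_ge0 ltW.
by rewrite !natr_absz !ger0_norm ?denq_ge0 // numqE.
Qed.

Section DenominatorPowers.

Variables (r : rat) (n d : nat).
Hypothesis hrd : r * d%:R = n%:R.

(* z lies in Z[1/d]: some power of d clears its denominator. *)
Definition Zd (z : rat) : Prop := exists M (w : int), d%:R ^+ M * z = w%:~R.

Lemma Zd_nat m : Zd m%:R.
Proof. by exists 0%N, m%:Z; rewrite expr0 mul1r. Qed.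

Lemma Zd_add x y : Zd x -> Zd y -> Zd (x + y).
Proof.
move=> [M [w hw]] [K [v hv]]; exists (M + K)%N, (w * d%:Z ^+ K + v * d%:Z ^+ M).
have -> : d%:R ^+ (M + K) * (x + y) =
          (d%:R ^+ M * x) * d%:R ^+ K + (d%:R ^+ K * y) * d%:R ^+ M.
  by rewrite exprD; ring.
by rewrite hw hv rmorphD /= !rmorphM /= !rmorphXn.
Qed.

Lemma Zd_opp x : Zd x -> Zd (- x).
Proof. by move=> [M [w hw]]; exists M, (- w); rewrite mulrN hw rmorphN. Qed.

Lemma Zd_mul x y : Zd x -> Zd y -> Zd (x * y).
Proof.
move=> [M [w hw]] [K [v hv]]; exists (M + K)%N, (w * v).
by rewrite exprD mulrACA hw hv rmorphM.
Qed.

Lemma Zd_r : Zd r.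
Proof. by exists 1%N, n%:Z; rewrite expr1 mulrC hrd. Qed.

Lemma Zd_pow k : Zd (r ^+ k).
Proof.
by elim: k => [|k ih]; [apply: (Zd_nat 1) | rewrite exprS; apply: Zd_mul Zd_r ih].
Qed.

Lemma Zd_pow_sum ks : Zd (pow_sum r ks).
Proof.
apply: (big_ind Zd); [exact: (Zd_nat 0) | exact: Zd_add | move=> k _].
exact: Zd_pow.
Qed.

Hypothesis hco : coprime n d.

(* An integer of the form r * z with z in Z[1/d] is a multiple of n:
   d^(M+1) m = n w and n is coprime to d. *)
Lemma dvd_num_Zd m z : Zd z -> m%:R = r * z -> (n %| m)%N.
Proof.
move=> [M [w hw]] hm.
have e : ((m * d ^ M.+1)%N%:R : rat) = n%:R * w%:~R.
  by rewrite -hw -hrd natrM natrX hm exprS; ring.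
have ez : (m * d ^ M.+1)%N%:Z = n%:Z * w.
  by apply: (@intr_inj rat); rewrite [RHS]rmorphM /= -e; exact: pmulrn.
have : (n %| m * d ^ M.+1)%N.
  by rewrite -[(m * _)%N]absz_nat ez abszM absz_nat dvdn_mulr.
by rewrite Gauss_dvdl // coprimeXr.
Qed.

Hypothesis hr : 0 < r.

(* If
   r (c0 + r Y) = a + e0 + r e' (constant parts c0, e0 split off by
   [pow_sum_shift]), then a + e0 = q n by [dvd_num_Zd], so r Y = (d q - c0) + e'
   with d q - c0 > 0: the same situation for the shifted exponents. *)
Lemma nat_ndvd_low_digits (ks : seq nat) (a : nat) : (0 < a)%N ->
  (forall j, (count_mem j ks < d)%N) -> ~ Defs.sdvd r a%:R (r * pow_sum r ks).
Proof.
have [B] : exists B, all (fun k => k < B)%N ks.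
  exists (\max_(k <- ks) k)%N.+1; apply/allP => k hk.
  by rewrite ltnS (leq_bigmax_seq (F := id) k hk).
elim: B ks a => [|B ih] ks a hB ha hcnt [e [he hsum]].
  case: ks hB {hcnt} hsum => // _; rewrite /pow_sum big_nil mulr0 => hsum.
  have := inS_ge0 (ltW hr) he; have : 1 <= a%:R :> rat by rewrite ler1n.
  lra.
have [es ee] := proj1 (inSP r e) he.
move: hsum; rewrite (pow_sum_shift r ks) ee (pow_sum_shift r es).
set c0 := count_mem 0%N ks; set Y := pow_sum r (shift_exps ks).
set e0 := count_mem 0%N es; set e' := pow_sum r (shift_exps es) => hsum.
have he' : inS r e' by apply/inSP; exists (shift_exps es).
have [q hq] : exists q, (a + e0)%N = (q * n)%N.
  apply/dvdnP; apply: (@dvd_num_Zd _ (c0%:R + r * Y - e')).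
    apply: Zd_add; [apply: Zd_add | apply/Zd_opp/Zd_pow_sum].
      exact: Zd_nat.
    exact: Zd_mul Zd_r (Zd_pow_sum _).
  by rewrite natrD mulrBr hsum; ring.
have hq0 : (0 < q)%N by rewrite lt0n; apply/eqP => hq0; move: hq; rewrite hq0; lia.
have hc0 : (c0 < d * q)%N by rewrite (leq_trans (hcnt 0%N)) // leq_pmulr.
have hY : r * Y = (d * q - c0)%N%:R + e'.
  have : c0%:R + r * Y = (d * q)%N%:R + e'.
    apply: (mulfI (lt0r_neq0 hr)); rewrite hsum mulrDr addrA -natrD hq !natrM -hrd.
    by rewrite [q%:R * _]mulrC -mulrA.
  by move=> h; rewrite natrB ?(ltnW hc0) // addrAC -h addrC addKr.
apply: (ih (shift_exps ks) (d * q - c0)%N _ _ _ (ex_intro _ e' (conj he' hY))).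
- apply/allP => _ /mapP [[|k] /[!mem_filter] /andP [//= hk hks] ->].
  by have := allP hB _ hks.
- by rewrite subn_gt0.
- by move=> j; rewrite count_shift_exps.
Qed.

End DenominatorPowers.

Lemma bernoulli_nat (n K : nat) : (n ^ K * (n + K) <= (n + 1) ^ K * n)%N.
Proof.
elim: K => [|K ih]; first by rewrite !expn0 addn0.
have : ((n + 1) * (n ^ K * (n + K)) <= (n + 1) * ((n + 1) ^ K * n))%N.
  by rewrite leq_mul2l ih orbT.
by rewrite !expnS; set p := (n ^ K)%N; set q := ((n + 1) ^ K)%N; nia.
Qed.

(* For 0 < r < 1 the powers of r eventually fall below any 1/N: with
   r = n/d and K = (N + 1) n, Bernoulli gives (N + 1) n^K <= (n + 1)^K <= d^K. *)
Lemma small_power (r : rat) (N : nat) : 0 < r -> r < 1 ->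
  exists K, N%:R * r ^+ K < 1.
Proof.
move=> hr hr1; set n := `|numq r|%N; set d := `|denq r|%N.
have hrd : r * d%:R = n%:R := num_den_eq hr.
have hd : 0 < d%:R :> rat by rewrite ltr0n absz_gt0 denq_neq0.
have hn : (0 < n)%N by rewrite -(ltr0n rat) -hrd mulr_gt0.
have hnd : (n < d)%N by rewrite -(ltr_nat rat) -hrd; nra.
set K := (N.+1 * n)%N; exists K.
have hK : (n ^ K * N.+1 <= d ^ K)%N.
  apply: leq_trans (_ : (n + 1) ^ K <= d ^ K)%N.
    rewrite -(leq_pmul2r hn); apply: leq_trans (bernoulli_nat n K); rewrite /K; nia.
  by rewrite leq_exp2r ?muln_gt0 ?hn ?addn1.
have : (N * n ^ K)%N%:R < (d ^ K)%N%:R :> rat by rewrite ltr_nat; nia.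
rewrite natrM !natrX -hrd exprMn mulrA.
by rewrite -[X in _ < X]mul1r ltr_pM2r // exprn_gt0.
Qed.

Lemma omega_inf_lt1 (r : rat) : 0 < r -> atomic r -> r < 1 -> omega_inf r 1.
Proof.
move=> hr hat hr1 N _ hbound.
set n := `|numq r|%N; set d := `|denq r|%N.
have hrd : r * d%:R = n%:R := num_den_eq hr.
have hn : (0 < n)%N by rewrite -(ltr0n rat) -hrd mulr_gt0 // ltr0n absz_gt0 denq_neq0.
have [K hK] := small_power N hr hr1.
have hrK : r ^+ K <> 0 by move/eqP; rewrite expf_eq0 (gt_eqF hr) andbF.
have [D [hD eD]] := hat _ (inS_pow r K) hrK.
(* d^K copies of the splitting of r^K are atoms summing to n^K, a multiple of 1 *)
set s := flatten (nseq (d ^ K) D).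
have hmemD a : a \in s -> a \in D by move=> /flattenP [l /nseqP [-> _]].
have hs a : a \in s -> atom r a by move=> /hmemD; apply: hD.
have hdvd : Defs.sdvd r 1 (\sum_(a <- s) a).
  exists (n ^ K - 1)%N%:R; split; first exact: inS_nat.
  rewrite big_flatten /= sumr_nseq -eD -[LHS]mulr_natr natrX -exprMn hrd -natrX.
  by rewrite natrB ?expn_gt0 ?hn // addrC subrK.
(* but at most N of them sum to at most N r^K < 1 *)
have [t [hts [hsz [w [hw ew]]]]] := hbound s hs hdvd.
have hle : \sum_(a <- t) a <= r ^+ K *+ size t.
  apply: sum_le_const => a /(mem_subseq hts) /hmemD haD.
  by rewrite eD; apply: sum_mem_le haD => b /hD /(atom_gt0 hr) /ltW.
have hw0 : 0 <= w := inS_ge0 (ltW hr) hw.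
have hsz' : (size t)%:R * r ^+ K <= N%:R * r ^+ K.
  by apply: ler_wpM2r; [rewrite exprn_ge0 // ltW | rewrite ler_nat].
move: hle; rewrite ew -mulr_natl; lra.
Qed.

(* For r = n/d >= 1 the number n r^j - 1 lies in S_r, by induction on j:
   n r^(j+1) - 1 = (n r^j - 1) + (n - d) r^(j+1). *)
Lemma num_pow_pred_inS (r : rat) (n d : nat) : r * d%:R = n%:R ->
  (d <= n)%N -> (0 < n)%N -> forall j, inS r (n%:R * r ^+ j - 1).
Proof.
move=> hrd hdn hn; elim=> [|j ih].
  by rewrite expr0 mulr1 -[1]/(1%N%:R) -natrB //; apply: inS_nat.
have -> : n%:R * r ^+ j.+1 - 1 = (n%:R * r ^+ j - 1) + (n - d)%N%:R * r ^+ j.+1.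
  by rewrite natrB // exprS -hrd; ring.
apply: inS_add ih _; apply/inSP; exists (nseq (n - d) j.+1).
by rewrite pow_sum_nseq.
Qed.

(* The bound omega(1) <= d for r >= 1.  Among atoms r^k whose sum 1 divides,
   either the atom 1 occurs, or some r^(j+1) occurs d times (and d r^(j+1)
   = n r^j is divisible by 1), or [nat_ndvd_low_digits] is contradicted. *)
Lemma omega_bound_den (r : rat) : 1 <= r -> omega_bound r 1 `|denq r|%N.
Proof.
move=> hr1; have hr : 0 < r := lt_le_trans ltr01 hr1.
set n := `|numq r|%N; set d := `|denq r|%N.
have hrd : r * d%:R = n%:R := num_den_eq hr.
have hco : coprime n d by rewrite /n /d coprime_num_den.
have hd : (0 < d)%N by rewrite absz_gt0 denq_neq0.
have hdn : (d <= n)%N by rewrite -(ler_nat rat) -hrd ler_peMl // ltr0n.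
have hn : (0 < n)%N := leq_trans hd hdn.
move=> s hs hdvd; have [ks eks] := atoms_pow hr hs.
have esum : \sum_(a <- s) a = pow_sum r ks by rewrite eks big_map.
have [h0 | h0] := boolP (0%N \in ks).
  exists [:: 1]; split; first by rewrite sub1seq eks -(expr0 r) map_f.
  split=> //; exists 0; split; first exact: (inS_nat r 0).
  by rewrite big_seq1 addr0.
have [/hasP [[|j] hj hc] | hc] := boolP (has (fun k => d <= count_mem k ks)%N ks).
- by rewrite hj in h0.
- exists (nseq d (r ^+ j.+1)); split.
    apply: subseq_nseq; rewrite eks count_map (leq_trans hc) //.
    by apply: sub_count => i /= /eqP ->.
  split; first by rewrite size_nseq.
  exists (n%:R * r ^+ j - 1); split; first exact: num_pow_pred_inS hrd hdn hn j.
  by rewrite sumr_nseq -mulr_natr exprS -hrd; ring.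
- exfalso.
  apply: (nat_ndvd_low_digits hrd hco hr (ks := shift_exps ks) (a := 1%N)) => //.
    move=> j; rewrite count_shift_exps ltnNge; apply: contra hc => hj.
    by apply/hasP; exists j.+1 => //; rewrite -has_pred1 has_count (leq_trans hd hj).
  have -> : r * pow_sum r (shift_exps ks) = pow_sum r ks.
    by rewrite (pow_sum_shift r ks) (count_memPn h0) add0r.
  by rewrite -esum.
Qed.

(* For atomic S_r with r > 1 not an integer, r itself is an atom: in a
   factorization of r into atoms (powers of r, each at most r) either r occurs,
   or all atoms equal 1 and r would be an integer. *)
Lemma self_atom (r : rat) : 1 < r -> atomic r -> ~ (exists m : nat, r = m%:R) ->
  atom r r.
Proof.
move=> hr1 hat hnat; have hr : 0 < r := lt_trans ltr01 hr1.
have hrS : inS r r by rewrite -{2}(expr1 r); apply: inS_pow.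
have [D [hD eD]] := hat r hrS (elimN eqP (lt0r_neq0 hr)).
have [// | hnD] := boolP (r \in D); first exact: hD.
exfalso; apply: hnat; exists (size D).
suff /all_pred1P eD1 : all (pred1 1) D by rewrite eD eD1 sumr_nseq size_nseq.
apply/allP => a ha; have [[|[|k]] ek] := atom_pow hr (hD a ha).
- by rewrite ek expr0 /=.
- by move: hnD; rewrite -[r]expr1 -ek ha.
- have : a <= r by rewrite eD; apply: sum_mem_le ha => b /hD /(atom_gt0 hr) /ltW.
  by rewrite ek exprS -[leRHS]mulr1 ler_pM2l // leNgt exprn_egt1.
Qed.

(* The bound omega(1) >= d for r > 1 not an integer: d copies of the atom r
   sum to n, a multiple of 1, while k < d copies sum to k r, which is not
   divisible by 1 by [nat_ndvd_low_digits]. *)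
Lemma den_le_omega_bound (r : rat) (N : nat) : 1 < r -> atomic r ->
  ~ (exists m : nat, r = m%:R) -> omega_bound r 1 N -> (`|denq r| <= N)%N.
Proof.
move=> hr1 hat hnat hbound; have hr : 0 < r := lt_trans ltr01 hr1.
set n := `|numq r|%N; set d := `|denq r|%N.
have hrd : r * d%:R = n%:R := num_den_eq hr.
have hco : coprime n d by rewrite /n /d coprime_num_den.
have hd : (0 < d)%N by rewrite absz_gt0 denq_neq0.
have hdn : (d <= n)%N by rewrite -(ler_nat rat) -hrd ler_peMl ?ltW // ltr0n.
have hs a : a \in nseq d r -> atom r a by move=> /nseqP [-> _]; apply: self_atom.
have hdvd : Defs.sdvd r 1 (\sum_(a <- nseq d r) a).
  exists (n - 1)%N%:R; split; first exact: inS_nat.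
  by rewrite sumr_nseq -[LHS]mulr_natr hrd natrB ?(leq_trans hd hdn) // addrC subrK.
have [t [hts [hsz ht]]] := hbound _ hs hdvd.
have et : t = nseq (size t) r.
  by apply/all_pred1P/allP => a /(mem_subseq hts) /nseqP [-> _] /=.
rewrite leqNgt; apply/negP => hN.
apply: (nat_ndvd_low_digits hrd hco hr (ks := nseq (size t) 0%N) (a := 1%N)) => //.
  move=> j; rewrite count_nseq /=; case: (0%N == j); last by rewrite mul0n.
  by rewrite mul1n (leq_ltn_trans hsz hN).
by move: ht; rewrite {1}et sumr_nseq pow_sum_nseq mulr1 mulr_natr.
Qed.

Unset Implicit Arguments.

Theorem proposition5p3 (r : rat) (hr : 0 < r) (hat : atomic r) :
  (r < 1 -> omega_inf r 1) /\
  ((exists m : nat, r = m%:R) -> omega_eq r 1 1) /\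
  (1 < r -> ~ (exists m : nat, r = m%:R) -> omega_eq r 1 `|denq r|%N).
Proof.
split; first exact: omega_inf_lt1.
split.
  (* r = m >= 1 has denominator 1, and the bound 1 is trivially minimal *)
  move=> [m em]; have hr1 : 1 <= r by rewrite em ler1n -(ltr0n rat) -em.
  have hd1 : `|denq r|%N = 1%N by rewrite em -[m%:R]/((m%:Z)%:~R) denq_int.
  by split=> //; split=> //; rewrite -hd1; apply: omega_bound_den.
move=> hr1 hnat; split; first by rewrite absz_gt0 denq_neq0.
split; first exact: omega_bound_den (ltW hr1).
by move=> N _; apply: den_le_omega_bound.
Qed.
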